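(* For every $\vec x\in\mathfrak{x}$, let $\vec{\rho_x}(\vec x)=(\rho_x(x_1),\dots,\rho_x(x_{K-1}))\in\mathbb{R}^{K-1}$ and let $\vec v(\vec x)\in\mathbb{R}^{K-1}$ be defined by $\mathrm{W}\vec v(\vec x)=\partial_{\vec x}\mathbf{A}_{\boldsymbol\xi}(\vec x)$. Then the residual $\nu=\vec v(\vec x)-\vec{\rho_x}(\vec x)$ satisfies $$\nu^T\mathrm{W}\nu\le C\kappa^2\alpha(\boldsymbol\xi)M\,\overline\delta(\vec x)^2,$$ with some universal constant $C$.
   Context: $I=[a,b]$, $M>0$. Mesh $\boldsymbol\xi=(\xi_0,\dots,\xi_K)$ with $0=\xi_0<\dots<\xi_K=M$, $\delta_k=\xi_k-\xi_{k-1}$, $\alpha(\boldsymbol\xi)=\max_k\delta_k/\min_k\delta_k$. $\mathfrak{x}=\{\vec x=(x_1,\dots,x_{K-1}):a<x_1<\dots<x_{K-1}<b\}$ with $x_0=a$, $x_K=b$, and $\overline\delta(\vec x)=\max_k(x_k-x_{k-1})$. $\theta_0,\dots,\theta_K$ are the piecewise linear hat functions on $[0,M]$ with $\theta_k(\xi_m)=1$ if $m=k$ and $0$ otherwise; $\mathbf{X}_{\boldsymbol\xi}[\vec x]=\sum_{k=0}^Kx_k\theta_k$. $\mathrm{W}$ is the symmetric tridiagonal $(K-1)\times(K-1)$ matrix with $\mathrm{W}_{k,k}=\frac13(\delta_k+\delta_{k+1})$, $\mathrm{W}_{k,k+1}=\mathrm{W}_{k+1,k}=\frac16\delta_{k+1}$.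 $\rho\in C^\infty(I)$ with $\rho_x(a)=\rho_x(b)=0$, and $\kappa>0$ with $|\rho_x|,|\rho_{xx}|,|\rho_{xxx}|\le\kappa$ on $I$. $\mathbf{A}_{\boldsymbol\xi}(\vec x)=\int_0^M\rho(\mathbf{X}_{\boldsymbol\xi}[\vec x](\xi))\,d\xi$, so $[\partial_{\vec x}\mathbf{A}_{\boldsymbol\xi}(\vec x)]_k=\int_0^M\rho_x(\mathbf{X}_{\boldsymbol\xi}[\vec x])\theta_k\,d\xi$. *)

From Stdlib Require Import Reals Lra Arith.
From Coquelicot Require Export Coquelicot.
Export Rdefinitions.
Open Scope R_scope.

Definition delta (xi : nat -> R) (k : nat) : R := xi k - xi (k - 1)%nat.

Fixpoint maxupto (f : nat -> R) (n : nat) : R :=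
  match n with O => f O | S p => Rmax (maxupto f p) (f (S p)) end.
Fixpoint minupto (f : nat -> R) (n : nat) : R :=
  match n with O => f O | S p => Rmin (minupto f p) (f (S p)) end.

Definition alpha (xi : nat -> R) (K : nat) : R :=
  maxupto (fun k => delta xi (S k)) (K - 1) / minupto (fun k => delta xi (S k)) (K - 1).

Definition dbar (x : nat -> R) (K : nat) : R :=
  maxupto (fun k => x (S k) - x k) (K - 1).

(* hat functions theta_k on [0, M] (correct values on [0, xi K]) *)
Definition hat (xi : nat -> R) (K k : nat) (s : R) : R :=
  if (k =? 0)%nat then Rmax 0 ((xi 1%nat - s) / (xi 1%nat - xi 0%nat))
  else if (k =? K)%nat then Rmax 0 ((s - xi (K - 1)%nat) / (xi K - xi (K - 1)%nat))
  else Rmax 0 (Rmin ((s - xi (k - 1)%nat) / (xi k - xi (k - 1)%nat))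
                    ((xi (S k) - s) / (xi (S k) - xi k))).

Definition Xmap (xi : nat -> R) (K : nat) (x : nat -> R) (s : R) : R :=
  sum_n_m (fun k => x k * hat xi K k s) 0 K.

(* [d_x A_xi(x)]_k = int_0^M rho_x(X_xi[x](s)) theta_k(s) ds, with M = xi K *)
Definition gradA (rho : R -> R) (xi : nat -> R) (K : nat) (x : nat -> R) (k : nat) : R :=
  RInt (fun s => Derive rho (Xmap xi K x s) * hat xi K k s) 0 (xi K).

(* entries of the tridiagonal matrix W (indices 1..K-1) *)
Definition Wmat (xi : nat -> R) (i j : nat) : R :=
  if (i =? j)%nat then (delta xi i + delta xi (S i)) / 3
  else if (j =? S i)%nat then delta xi (S i) / 6
  else if (i =? S j)%nat then delta xi i / 6
  else 0.

(* The residual is r := W nu = dA - W rho_x(x).  On the two cells around xi_i the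
   integrand rho_x(X) theta_i differs from rho_x(x_i) theta_i by at most kappa * dbar
   (rho_x is kappa-Lipschitz and X is affine between neighbouring nodes), and theta_i
   integrates to half of each cell, so |r_i| <= 2 kappa dbar (delta_i + delta_(i+1)).
   W is diagonally dominant with excess (delta_i + delta_(i+1))/6, hence
   nu^T W nu >= sum_i (delta_i + delta_(i+1)) nu_i^2 / 6; with nu^T W nu = sum_i nu_i r_i
   and Young's inequality this gives nu^T W nu <= 24 kappa^2 dbar^2 sum_i (delta_i + delta_(i+1))
   <= 48 kappa^2 M dbar^2, and alpha >= 1. *)

From Stdlib Require Import Reals Lra Lia Psatz.
From Coquelicot Require Import Coquelicot.
Open Scope R_scope.

Fixpoint sum1n (f : nat -> R) (n : nat) : R :=
  match n with O => 0 | S p => sum1n f p + f (S p) end.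

Lemma sum_n_m_1 (f : nat -> R) n : sum_n_m f 1 n = sum1n f n.
Proof.
  induction n as [|n IH].
  - now rewrite sum_n_m_zero by lia.
  - rewrite sum_n_Sm by lia. now rewrite IH.
Qed.

Lemma sum_n_m_0 (f : nat -> R) n : sum_n_m f 0 n = f 0%nat + sum1n f n.
Proof. rewrite sum_Sn_m by lia. now rewrite sum_n_m_1. Qed.

Lemma sum1n_ext f g n :
  (forall j, (1 <= j <= n)%nat -> f j = g j) -> sum1n f n = sum1n g n.
Proof.
  induction n as [|n IH]; intros Hfg; simpl; [reflexivity|].
  rewrite IH, Hfg by (lia || (intros; apply Hfg; lia)). reflexivity.
Qed.

Lemma sum1n_le f g n :
  (forall j, (1 <= j <= n)%nat -> f j <= g j) -> sum1n f n <= sum1n g n.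
Proof.
  induction n as [|n IH]; intros Hfg; simpl; [lra|].
  assert (f (S n) <= g (S n)) by (apply Hfg; lia).
  assert (sum1n f n <= sum1n g n) by (apply IH; intros; apply Hfg; lia). lra.
Qed.

Lemma sum1n_plus f g n : sum1n (fun j => f j + g j) n = sum1n f n + sum1n g n.
Proof. induction n as [|n IH]; simpl; [lra|]. rewrite IH. lra. Qed.

Lemma sum1n_minus f g n : sum1n (fun j => f j - g j) n = sum1n f n - sum1n g n.
Proof. induction n as [|n IH]; simpl; [lra|]. rewrite IH. lra. Qed.

Lemma sum1n_scal_l c f n : sum1n (fun j => c * f j) n = c * sum1n f n.
Proof. induction n as [|n IH]; simpl; [lra|]. rewrite IH. lra. Qed.

Lemma sum1n_swap (f : nat -> nat -> R) n m :
  sum1n (fun i => sum1n (fun j => f i j) n) m = sum1n (fun j => sum1n (fun i => f i j) m) n.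
Proof.
  induction m as [|m IH]; simpl.
  - induction n as [|n IHn]; simpl; lra.
  - rewrite IH, <- sum1n_plus. reflexivity.
Qed.

Lemma sum1n_indicator p c n :
  sum1n (fun j => if (j =? p)%nat then c else 0) n =
  if andb (1 <=? p)%nat (p <=? n)%nat then c else 0.
Proof.
  induction n as [|n IH]; cbn [sum1n].
  - destruct (Nat.leb_spec 1 p), (Nat.leb_spec p 0); try lia; simpl; lra.
  - rewrite IH. destruct (Nat.eqb_spec (S n) p) as [<-|Hp].
    + destruct (Nat.leb_spec (S n) n), (Nat.leb_spec (S n) (S n)); try lia; simpl; lra.
    + destruct (Nat.leb_spec 1 p), (Nat.leb_spec p n), (Nat.leb_spec p (S n));
        try lia; simpl; lra.
Qed.

Lemma sum_n_m_0_indicator p c n : (p <= n)%nat ->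
  sum_n_m (fun j => if (j =? p)%nat then c else 0) 0 n = c.
Proof.
  intros Hp. rewrite sum_n_m_0, sum1n_indicator.
  destruct (Nat.eqb_spec 0 p), (Nat.leb_spec 1 p), (Nat.leb_spec p n);
    try lia; simpl; lra.
Qed.

Lemma sum1n_telescope (u : nat -> R) n :
  sum1n (fun i => u i - u (i - 1)%nat) n = u n - u 0%nat.
Proof.
  induction n as [|n IH]; cbn [sum1n]; [lra|].
  rewrite IH. replace (S n - 1)%nat with n by lia. lra.
Qed.

Lemma div_nonneg y d : 0 < d -> 0 <= y -> 0 <= y / d.
Proof. intros. apply Rle_div_r; lra. Qed.
Lemma div_nonpos y d : 0 < d -> y <= 0 -> y / d <= 0.
Proof. intros. apply Rle_div_l; lra. Qed.
Lemma div_le_1 y d : 0 < d -> y <= d -> y / d <= 1.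
Proof. intros. apply Rle_div_l; lra. Qed.
Lemma div_ge_1 y d : 0 < d -> d <= y -> 1 <= y / d.
Proof. intros. apply Rle_div_r; lra. Qed.

Section Increasing.

Variables (u : nat -> R) (K : nat).
Hypothesis u_incr : forall k, (k < K)%nat -> u k < u (S k).

Lemma incr_le i j : (i <= j <= K)%nat -> u i <= u j.
Proof.
  induction j as [|j IH]; intros Hij.
  - replace i with 0%nat by lia. lra.
  - destruct (Nat.eq_dec i (S j)) as [->|]; [lra|].
    assert (u i <= u j) by (apply IH; lia).
    assert (u j < u (S j)) by (apply u_incr; lia). lra.
Qed.

Lemma incr_lt i j : (i < j <= K)%nat -> u i < u j.
Proof.
  intros Hij. destruct j as [|j]; [lia|].
  assert (u i <= u j) by (apply incr_le; lia).
  assert (u j < u (S j)) by (apply u_incr; lia). lra.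
Qed.

End Increasing.

Definition interp (p q u w s : R) : R :=
  u * ((q - s) / (q - p)) + w * ((s - p) / (q - p)).

Lemma interp_between p q u w c d s : p < q -> p <= s <= q ->
  c <= u <= d -> c <= w <= d -> c <= interp p q u w s <= d.
Proof.
  intros Hpq Hs Hu Hw. unfold interp.
  assert (E : (q - s) / (q - p) = 1 - (s - p) / (q - p)) by (field; lra).
  assert (0 <= (s - p) / (q - p)) by (apply div_nonneg; lra).
  assert ((s - p) / (q - p) <= 1) by (apply div_le_1; lra).
  rewrite E. split; nra.
Qed.

Lemma interp_continuous p q u w s : p < q -> continuous (interp p q u w) s.
Proof.
  intros Hpq. apply (@ex_derive_continuous R_AbsRing R_NormedModule).
  unfold interp. auto_derive. lra.
Qed.

Lemma is_RInt_interp p q u w : p < q ->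
  is_RInt (interp p q u w) p q ((q - p) * (u + w) / 2).
Proof.
  intros Hpq.
  set (F := fun s => (w * (s - p) ^ 2 - u * (q - s) ^ 2) / (2 * (q - p))).
  replace ((q - p) * (u + w) / 2) with (minus (F q) (F p))
    by (unfold F, minus, plus, opp; simpl; field; lra).
  apply (@is_RInt_derive R_CompleteNormedModule).
  - intros s _. unfold F, interp. auto_derive; [lra|]. field. lra.
  - intros s _. now apply interp_continuous.
Qed.

Section Mesh.

Variables (xi : nat -> R) (K : nat).
Hypothesis xi_incr : forall k, (k < K)%nat -> xi k < xi (S k).

Let step_pos k : (1 <= k <= K)%nat -> 0 < xi k - xi (k - 1)%nat.
Proof. intros. assert (xi (k - 1)%nat < xi k) by (apply (incr_lt xi K xi_incr); lia). lra. Qed.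

Let xi_le i j : (i <= j <= K)%nat -> xi i <= xi j.
Proof. apply incr_le, xi_incr. Qed.

Lemma hat_out_of_support j s : (1 <= j <= K - 1)%nat ->
  s <= xi (j - 1)%nat \/ xi (S j) <= s -> hat xi K j s = 0.
Proof.
  intros Hj Hs. unfold hat.
  destruct (Nat.eqb_spec j 0), (Nat.eqb_spec j K); try lia.
  assert (Hl := step_pos j ltac:(lia)).
  assert (Hr := step_pos (S j) ltac:(lia)). rewrite Nat.sub_succ, Nat.sub_0_r in Hr.
  apply Rmax_left. destruct Hs.
  - eapply Rle_trans; [apply Rmin_l|]. apply div_nonpos; lra.
  - eapply Rle_trans; [apply Rmin_r|]. apply div_nonpos; lra.
Qed.

Section Cell.

Variables (k : nat) (s : R).
Hypothesis Hk : (1 <= k <= K)%nat.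
Hypothesis Hs : xi (k - 1)%nat <= s <= xi k.

Lemma hat_on_cell_right : hat xi K k s = (s - xi (k - 1)%nat) / (xi k - xi (k - 1)%nat).
Proof.
  assert (Hd := step_pos k Hk).
  assert (0 <= (s - xi (k - 1)%nat) / (xi k - xi (k - 1)%nat)) by (apply div_nonneg; lra).
  unfold hat. destruct (Nat.eqb_spec k 0); [lia|].
  destruct (Nat.eqb_spec k K) as [->|HkK]; [now apply Rmax_right|].
  assert (Hd' := step_pos (S k) ltac:(lia)). rewrite Nat.sub_succ, Nat.sub_0_r in Hd'.
  assert ((s - xi (k - 1)%nat) / (xi k - xi (k - 1)%nat) <= 1) by (apply div_le_1; lra).
  assert (1 <= (xi (S k) - s) / (xi (S k) - xi k)) by (apply div_ge_1; lra).
  rewrite Rmin_left by lra. now apply Rmax_right.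
Qed.

Lemma hat_on_cell_left : hat xi K (k - 1) s = (xi k - s) / (xi k - xi (k - 1)%nat).
Proof.
  assert (Hd := step_pos k Hk).
  assert (0 <= (xi k - s) / (xi k - xi (k - 1)%nat)) by (apply div_nonneg; lra).
  unfold hat. destruct (Nat.eqb_spec (k - 1) 0) as [E|E].
  - replace k with 1%nat in * by lia. now apply Rmax_right.
  - destruct (Nat.eqb_spec (k - 1) K); [lia|].
    replace (S (k - 1)) with k by lia.
    assert (Hd' := step_pos (k - 1) ltac:(lia)).
    assert (xi (k - 1)%nat <= s) by lra.
    assert (1 <= (s - xi (k - 1 - 1)%nat) / (xi (k - 1)%nat - xi (k - 1 - 1)%nat))
      by (apply div_ge_1; lra).
    assert ((xi k - s) / (xi k - xi (k - 1)%nat) <= 1) by (apply div_le_1; lra).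
    rewrite Rmin_right by lra. now apply Rmax_right.
Qed.

Lemma hat_off_cell j : (j <= K)%nat -> j <> k -> j <> (k - 1)%nat -> hat xi K j s = 0.
Proof.
  intros HjK Hjk Hjk'.
  destruct (Nat.eq_dec j 0) as [->|Hj0]; [|destruct (Nat.eq_dec j K) as [->|HjK']].
  - unfold hat; simpl. apply Rmax_left.
    assert (xi 1%nat <= xi (k - 1)%nat) by (apply xi_le; lia).
    assert (Hd : 0 < xi 1%nat - xi 0%nat) by exact (step_pos 1 ltac:(lia)).
    apply div_nonpos; lra.
  - unfold hat. destruct (Nat.eqb_spec K 0); [lia|]. rewrite Nat.eqb_refl. apply Rmax_left.
    assert (xi k <= xi (K - 1)%nat) by (apply xi_le; lia).
    assert (Hd := step_pos K ltac:(lia)). apply div_nonpos; lra.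
  - apply hat_out_of_support; [lia|].
    destruct (Nat.lt_ge_cases j k).
    + right. assert (xi (S j) <= xi (k - 1)%nat) by (apply xi_le; lia). lra.
    + left. assert (xi k <= xi (j - 1)%nat) by (apply xi_le; lia). lra.
Qed.

Lemma Xmap_on_cell x :
  Xmap xi K x s = interp (xi (k - 1)%nat) (xi k) (x (k - 1)%nat) (x k) s.
Proof.
  set (A := (xi k - s) / (xi k - xi (k - 1)%nat)).
  set (B := (s - xi (k - 1)%nat) / (xi k - xi (k - 1)%nat)).
  unfold Xmap. transitivity (sum_n_m (fun j => plus
      (if (j =? k - 1)%nat then x (k - 1)%nat * A else 0)
      (if (j =? k)%nat then x k * B else 0)) 0 K).
  - apply sum_n_m_ext_loc. intros j Hj.
    destruct (Nat.eqb_spec j (k - 1)), (Nat.eqb_spec j k); try lia; try subst j.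
    + rewrite hat_on_cell_left. unfold plus; simpl. fold A. lra.
    + rewrite hat_on_cell_right. unfold plus; simpl. fold B. lra.
    + rewrite hat_off_cell by lia. unfold plus; simpl. lra.
  - rewrite sum_n_m_plus, !sum_n_m_0_indicator by lia. reflexivity.
Qed.

End Cell.

End Mesh.

Lemma Derive_continuous rho t : ex_derive_n rho 2 t -> continuous (Derive rho) t.
Proof. intros H. exact (@ex_derive_continuous R_AbsRing R_NormedModule _ _ H). Qed.

Lemma Derive_lipschitz rho a b kappa :
  (forall t, a <= t <= b -> ex_derive_n rho 2 t) ->
  (forall t, a <= t <= b -> Rabs (Derive_n rho 2 t) <= kappa) ->
  forall y z, a <= y <= b -> a <= z <= b ->
  Rabs (Derive rho y - Derive rho z) <= kappa * Rabs (y - z).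
Proof.
  intros Hex Hbound y z Hy Hz.
  assert (Hin : forall u, Rmin z y <= u <= Rmax z y -> a <= u <= b).
  { intros u Hu. unfold Rmin, Rmax in Hu. destruct Rle_dec; lra. }
  destruct (MVT_gen (Derive rho) z y (Derive (Derive rho))) as [c [Hc ->]].
  - intros u Hu. apply Derive_correct, Hex, Hin. lra.
  - intros u Hu. apply continuity_pt_filterlim, Derive_continuous, Hex, Hin, Hu.
  - rewrite Rabs_mult. apply Rmult_le_compat_r; [apply Rabs_pos|].
    apply (Hbound c), Hin, Hc.
Qed.

Lemma RInt_ext_open (g h : R -> R) p q : p <= q ->
  (forall s, p < s < q -> g s = h s) -> ex_RInt h p q ->
  ex_RInt g p q /\ RInt g p q = RInt h p q.
Proof.
  intros Hpq Hgh Hh. split.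
  - apply (ex_RInt_ext h); [|exact Hh].
    intros s Hs. rewrite Rmin_left, Rmax_right in Hs by lra. symmetry. auto.
  - apply RInt_ext. intros s Hs. rewrite Rmin_left, Rmax_right in Hs by lra. auto.
Qed.

Lemma RInt_zero_open (g : R -> R) p q : p <= q ->
  (forall s, p < s < q -> g s = 0) -> ex_RInt g p q /\ RInt g p q = 0.
Proof.
  intros Hpq Hg. destruct (RInt_ext_open g (fun _ => 0) p q Hpq Hg) as [Hex ->].
  - apply ex_RInt_const.
  - split; [exact Hex|]. rewrite RInt_const. apply (@scal_zero_r R_Ring R_ModuleSpace).
Qed.

Lemma RInt_interp_lipschitz (D : R -> R) a b kappa p q u w e0 e1 z :
  p < q -> a <= u -> u <= w -> w <= b -> 0 <= kappa ->
  (forall t, a <= t <= b -> continuous D t) ->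
  (forall y y', a <= y <= b -> a <= y' <= b -> Rabs (D y - D y') <= kappa * Rabs (y - y')) ->
  0 <= e0 <= 1 -> 0 <= e1 <= 1 -> u <= z <= w ->
  let g := fun s => D (interp p q u w s) * interp p q e0 e1 s in
  ex_RInt g p q /\
  Rabs (RInt g p q - D z * ((q - p) * (e0 + e1) / 2)) <= kappa * (w - u) * (q - p).
Proof.
  intros Hpq Hau Huw Hwb Hk HDc HDl He0 He1 Hz g.
  set (phi := interp p q e0 e1).
  assert (Hphi : is_RInt phi p q ((q - p) * (e0 + e1) / 2)) by now apply is_RInt_interp.
  assert (Hrange : forall s, p <= s <= q -> u <= interp p q u w s <= w)
    by (intros; apply interp_between; lra).
  assert (Hex : ex_RInt g p q).
  { apply (@ex_RInt_continuous R_CompleteNormedModule). intros s Hs.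
    rewrite Rmin_left, Rmax_right in Hs by lra.
    apply (continuous_mult (fun s => D (interp p q u w s)) phi); [|now apply interp_continuous].
    apply continuous_comp; [now apply interp_continuous|].
    apply HDc. specialize (Hrange s Hs). lra. }
  split; [exact Hex|].
  assert (Hdiff : is_RInt (fun s => minus (g s) (D z * phi s)) p q
                    (minus (RInt g p q) (D z * ((q - p) * (e0 + e1) / 2)))).
  { apply (@is_RInt_minus R_NormedModule).
    - exact (@RInt_correct R_CompleteNormedModule _ _ _ Hex).
    - exact (@is_RInt_scal R_NormedModule phi p q (D z) _ Hphi). }
  change (minus (RInt g p q) (D z * ((q - p) * (e0 + e1) / 2)))
    with (RInt g p q - D z * ((q - p) * (e0 + e1) / 2)) in Hdiff.
  rewrite <- (is_RInt_unique _ _ _ _ Hdiff).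
  replace (kappa * (w - u) * (q - p)) with ((q - p) * (kappa * (w - u))) by ring.
  apply abs_RInt_le_const; [lra| eexists; exact Hdiff|].
  intros s Hs. unfold g, minus, plus, opp; simpl. fold phi.
  replace (D (interp p q u w s) * phi s + - (D z * phi s))
    with ((D (interp p q u w s) - D z) * phi s) by ring.
  assert (Hphis : 0 <= phi s <= 1) by (apply interp_between; lra).
  specialize (Hrange s Hs).
  assert (Rabs (D (interp p q u w s) - D z) <= kappa * (w - u)).
  { eapply Rle_trans; [apply HDl; lra|].
    apply Rmult_le_compat_l; [lra|]. apply Rabs_le; lra. }
  rewrite Rabs_mult, (Rabs_pos_eq (phi s)) by lra.
  assert (0 <= Rabs (D (interp p q u w s) - D z)) by apply Rabs_pos. nra.
Qed.

Lemma cross_term_ge c u v : - (Rabs c * u ^ 2 / 2) - Rabs c * v ^ 2 / 2 <= u * c * v.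
Proof.
  assert (0 <= Rabs c * (u + v) ^ 2) by (apply Rmult_le_pos; [apply Rabs_pos|apply pow2_ge_0]).
  assert (0 <= Rabs c * (u - v) ^ 2) by (apply Rmult_le_pos; [apply Rabs_pos|apply pow2_ge_0]).
  unfold Rabs in *. destruct Rcase_abs; nra.
Qed.

Lemma quad_form_ge_diag_dominance (A : nat -> nat -> R) (nu : nat -> R) n :
  (forall i j, A i j = A j i) ->
  sum1n (fun i => nu i ^ 2 *
           (A i i - sum1n (fun j => if (i =? j)%nat then 0 else Rabs (A i j)) n)) n
  <= sum1n (fun i => sum1n (fun j => nu i * A i j * nu j) n) n.
Proof.
  intros Hsym.
  (* nu_i A_ij nu_j >= - |A_ij| (nu_i^2 + nu_j^2) / 2; by symmetry of A, the nu_j^2 halves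
     summed over i give the same off-diagonal row sums as the nu_i^2 halves. *)
  set (O i j := if (i =? j)%nat then 0 else Rabs (A i j)).
  assert (HO : forall i j, O i j = O j i).
  { intros i j. unfold O. rewrite Hsym, Nat.eqb_sym. reflexivity. }
  set (T i j := (if (j =? i)%nat then A i i * nu i ^ 2 else 0)
                - O i j * nu i ^ 2 / 2 - O i j * nu j ^ 2 / 2).
  assert (Hrow : forall i, (1 <= i <= n)%nat ->
            sum1n (T i) n = nu i ^ 2 * A i i - nu i ^ 2 / 2 * sum1n (O i) n
                            - sum1n (fun j => O i j * nu j ^ 2 / 2) n).
  { intros i Hi. unfold T. rewrite !sum1n_minus, sum1n_indicator, <- sum1n_scal_l.
    destruct (Nat.leb_spec 1 i), (Nat.leb_spec i n); try lia; cbn [andb].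
    assert (sum1n (fun j => O i j * nu i ^ 2 / 2) n = sum1n (fun j => nu i ^ 2 / 2 * O i j) n)
      by (apply sum1n_ext; intros; lra).
    lra. }
  apply Rle_trans with (sum1n (fun i => sum1n (T i) n) n).
  - rewrite (sum1n_ext _ _ n Hrow), !sum1n_minus, sum1n_swap.
    rewrite (sum1n_ext (fun j => sum1n (fun i => O i j * nu j ^ 2 / 2) n)
                       (fun j => nu j ^ 2 / 2 * sum1n (O j) n)).
    + rewrite <- !sum1n_minus. right. apply sum1n_ext. intros. unfold O. lra.
    + intros j _. rewrite <- sum1n_scal_l. apply sum1n_ext. intros i _. rewrite HO. lra.
  - apply sum1n_le. intros i _. apply sum1n_le. intros j _. unfold T, O.
    destruct (Nat.eqb_spec j i), (Nat.eqb_spec i j); try lia.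
    + subst j. lra.
    + pose proof (cross_term_ge (A i j) (nu i) (nu j)). lra.
Qed.

Lemma tridiag_residual_bound g p0 p1 p2 e1 e2 l1 l2 kappa d :
  0 <= kappa -> 0 < e1 -> 0 < e2 -> 0 <= l1 <= d -> 0 <= l2 <= d ->
  Rabs (g - p1 * (e1 + e2) / 2) <= kappa * (l1 * e1 + l2 * e2) ->
  Rabs (p1 - p0) <= kappa * l1 -> Rabs (p1 - p2) <= kappa * l2 ->
  Rabs (g - (e1 / 6 * p0 + (e1 + e2) / 3 * p1 + e2 / 6 * p2)) <= 2 * kappa * d * (e1 + e2).
Proof.
  intros Hk He1 He2 Hl1 Hl2 Hg H0 H2.
  apply Rabs_le_between in Hg, H0, H2. apply Rabs_le_between.
  assert (kappa * l1 <= kappa * d) by (apply Rmult_le_compat_l; lra).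
  assert (kappa * l2 <= kappa * d) by (apply Rmult_le_compat_l; lra).
  split; nra.
Qed.

Lemma Wmat_sym xi i j : Wmat xi i j = Wmat xi j i.
Proof.
  unfold Wmat. destruct (Nat.eqb_spec i j) as [->|]; [now rewrite Nat.eqb_refl|].
  destruct (Nat.eqb_spec j i); [lia|].
  destruct (Nat.eqb_spec j (S i)), (Nat.eqb_spec i (S j)); subst; reflexivity || lia.
Qed.

Lemma Wmat_row xi (w : nat -> R) n i : (1 <= i <= n)%nat -> w 0%nat = 0 -> w (S n) = 0 ->
  sum1n (fun j => Wmat xi i j * w j) n =
  delta xi i / 6 * w (i - 1)%nat + (delta xi i + delta xi (S i)) / 3 * w i
  + delta xi (S i) / 6 * w (S i).
Proof.
  intros Hi Hw0 HwS.
  rewrite (sum1n_ext _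
    (fun j => (if (j =? i - 1)%nat then delta xi i / 6 * w (i - 1)%nat else 0)
            + (if (j =? i)%nat then (delta xi i + delta xi (S i)) / 3 * w i else 0)
            + (if (j =? S i)%nat then delta xi (S i) / 6 * w (S i) else 0))).
  - rewrite !sum1n_plus, !sum1n_indicator.
    destruct (Nat.leb_spec 1 (i - 1)), (Nat.leb_spec (i - 1) n), (Nat.leb_spec 1 i),
      (Nat.leb_spec i n), (Nat.leb_spec 1 (S i)), (Nat.leb_spec (S i) n); try lia; simpl.
    + lra.
    + replace (S i) with (S n) by lia. rewrite HwS. lra.
    + replace (i - 1)%nat with 0%nat by lia. rewrite Hw0. lra.
    + replace (i - 1)%nat with 0%nat by lia. replace (S i) with (S n) by lia.
      rewrite Hw0, HwS. lra.
  - intros j _. unfold Wmat.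
    destruct (Nat.eqb_spec i j), (Nat.eqb_spec j (S i)), (Nat.eqb_spec i (S j)),
      (Nat.eqb_spec j (i - 1)), (Nat.eqb_spec j i); try lia; try subst j; field.
Qed.

Lemma Wmat_offdiag_sum xi n i : (1 <= i <= n)%nat -> 0 < delta xi i -> 0 < delta xi (S i) ->
  sum1n (fun j => if (i =? j)%nat then 0 else Rabs (Wmat xi i j)) n
  <= (delta xi i + delta xi (S i)) / 6.
Proof.
  intros Hi H1 H2.
  apply Rle_trans with (sum1n (fun j => (if (j =? S i)%nat then delta xi (S i) / 6 else 0)
                                      + (if (j =? i - 1)%nat then delta xi i / 6 else 0)) n).
  - apply sum1n_le. intros j _. unfold Wmat.
    destruct (Nat.eqb_spec i j), (Nat.eqb_spec j (S i)), (Nat.eqb_spec i (S j)),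
      (Nat.eqb_spec j (i - 1)); try lia; rewrite ?Rabs_R0, ?Rabs_pos_eq by lra; lra.
  - rewrite sum1n_plus, !sum1n_indicator. destruct andb, andb; lra.
Qed.

Lemma Wmat_quad_form_ge xi (nu : nat -> R) n :
  (forall i, (1 <= i <= S n)%nat -> 0 < delta xi i) ->
  sum1n (fun i => (delta xi i + delta xi (S i)) * nu i ^ 2 / 6) n
  <= sum1n (fun i => sum1n (fun j => nu i * Wmat xi i j * nu j) n) n.
Proof.
  intros Hdelta. eapply Rle_trans; [|apply quad_form_ge_diag_dominance, Wmat_sym].
  apply sum1n_le. intros i Hi.
  pose proof (Wmat_offdiag_sum xi n i Hi (Hdelta i ltac:(lia)) (Hdelta (S i) ltac:(lia))).
  replace (Wmat xi i i) with ((delta xi i + delta xi (S i)) / 3)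
    by (unfold Wmat; now rewrite Nat.eqb_refl).
  pose proof (pow2_ge_0 (nu i)). nra.
Qed.

Lemma quad_form_absorb (nu r Dg : nat -> R) n B :
  (forall i, (1 <= i <= n)%nat -> 0 <= Dg i /\ Rabs (r i) <= B * Dg i) ->
  sum1n (fun i => Dg i * nu i ^ 2 / 6) n <= sum1n (fun i => nu i * r i) n ->
  sum1n (fun i => nu i * r i) n <= 6 * B ^ 2 * sum1n Dg n.
Proof.
  intros Hr Hlow.
  (* Young: |nu| B <= nu^2 / 12 + 3 B^2, so half of the lower bound absorbs the cross term *)
  assert (Hpt : sum1n (fun i => nu i * r i) n
                <= sum1n (fun i => Dg i * nu i ^ 2 / 12 + 3 * B ^ 2 * Dg i) n).
  { apply sum1n_le. intros i Hi. destruct (Hr i Hi) as [HD HrB].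
    assert (nu i * r i <= Rabs (nu i) * (B * Dg i)).
    { eapply Rle_trans; [apply Rle_abs|].
      rewrite Rabs_mult. apply Rmult_le_compat_l; [apply Rabs_pos|exact HrB]. }
    assert (Rabs (nu i) ^ 2 = nu i ^ 2) by (rewrite <- !Rsqr_pow2; symmetry; apply Rsqr_abs).
    assert (0 <= (Rabs (nu i) - 6 * B) ^ 2 * Dg i) by (apply Rmult_le_pos; [apply pow2_ge_0|lra]).
    nra. }
  rewrite sum1n_plus, sum1n_scal_l in Hpt.
  replace (sum1n (fun i => Dg i * nu i ^ 2 / 12) n)
    with (/ 2 * sum1n (fun i => Dg i * nu i ^ 2 / 6) n) in Hpt
    by (rewrite <- sum1n_scal_l; apply sum1n_ext; intros; field).
  lra.
Qed.

Lemma sum1n_adjacent_steps xi n : xi 0%nat = 0 ->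
  (forall k, (k <= n)%nat -> xi k < xi (S k)) ->
  sum1n (fun i => delta xi i + delta xi (S i)) n <= 2 * xi (S n).
Proof.
  intros H0 Hincr. unfold delta. rewrite sum1n_plus, sum1n_telescope.
  rewrite (sum1n_ext _ (fun i => xi (S i) - xi (S (i - 1)))).
  2: { intros j Hj. now replace (S (j - 1)) with (S j - 1)%nat by lia. }
  rewrite (sum1n_telescope (fun i => xi (S i))).
  assert (xi n <= xi (S n)) by (apply Rlt_le, Hincr; lia).
  assert (xi 0%nat <= xi 1%nat) by (apply Rlt_le, Hincr; lia). simpl. lra.
Qed.

Lemma maxupto_ge f n k : (k <= n)%nat -> f k <= maxupto f n.
Proof.
  induction n as [|n IH]; intros Hk; simpl.
  - replace k with 0%nat by lia. lra.
  - destruct (Nat.eq_dec k (S n)) as [->|]; [apply Rmax_r|].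
    eapply Rle_trans; [apply IH; lia|apply Rmax_l].
Qed.

Lemma minupto_le f n k : (k <= n)%nat -> minupto f n <= f k.
Proof.
  induction n as [|n IH]; intros Hk; simpl.
  - replace k with 0%nat by lia. lra.
  - destruct (Nat.eq_dec k (S n)) as [->|]; [apply Rmin_r|].
    eapply Rle_trans; [apply Rmin_l|apply IH; lia].
Qed.

Lemma minupto_pos f n : (forall k, (k <= n)%nat -> 0 < f k) -> 0 < minupto f n.
Proof.
  induction n as [|n IH]; intros Hf; simpl; [apply Hf; lia|].
  apply Rmin_glb_lt; [apply IH; intros|]; apply Hf; lia.
Qed.

Lemma alpha_ge_1 xi K : (1 <= K)%nat -> (forall k, (k < K)%nat -> xi k < xi (S k)) ->
  1 <= alpha xi K.
Proof.
  intros HK Hincr. unfold alpha. set (f k := delta xi (S k)).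
  assert (Hf : forall k, (k <= K - 1)%nat -> 0 < f k).
  { intros k Hk. unfold f, delta. rewrite Nat.sub_succ, Nat.sub_0_r.
    assert (xi k < xi (S k)) by (apply Hincr; lia). lra. }
  apply div_ge_1; [now apply minupto_pos|].
  apply Rle_trans with (f 0%nat); [apply minupto_le|apply maxupto_ge]; lia.
Qed.

Section Gradient.

Variables (rho : R -> R) (a b kappa : R) (xi x : nat -> R) (K : nat).
Hypothesis xi_incr : forall k, (k < K)%nat -> xi k < xi (S k).
Hypothesis xi_0 : xi 0%nat = 0.
Hypothesis x_incr : forall k, (k < K)%nat -> x k < x (S k).
Hypothesis x_0 : x 0%nat = a.
Hypothesis x_K : x K = b.
Hypothesis kappa_ge0 : 0 <= kappa.
Hypothesis Drho_cont : forall t, a <= t <= b -> continuous (Derive rho) t.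
Hypothesis Drho_lip : forall y z, a <= y <= b -> a <= z <= b ->
  Rabs (Derive rho y - Derive rho z) <= kappa * Rabs (y - z).

Let integrand j s := Derive rho (Xmap xi K x s) * hat xi K j s.

Lemma RInt_integrand_on_cell k j e0 e1 z : (1 <= k <= K)%nat ->
  (forall s, xi (k - 1)%nat <= s <= xi k ->
     hat xi K j s = interp (xi (k - 1)%nat) (xi k) e0 e1 s) ->
  0 <= e0 <= 1 -> 0 <= e1 <= 1 -> x (k - 1)%nat <= z <= x k ->
  ex_RInt (integrand j) (xi (k - 1)%nat) (xi k) /\
  Rabs (RInt (integrand j) (xi (k - 1)%nat) (xi k)
        - Derive rho z * (delta xi k * (e0 + e1) / 2))
  <= kappa * (x k - x (k - 1)%nat) * delta xi k.
Proof.
  intros Hk Hhat He0 He1 Hz.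
  assert (Hxi : xi (k - 1)%nat < xi k) by (apply (incr_lt xi K xi_incr); lia).
  assert (Hx : a <= x (k - 1)%nat /\ x k <= b).
  { rewrite <- x_0, <- x_K. split; apply (incr_le x K x_incr); lia. }
  destruct (RInt_interp_lipschitz (Derive rho) a b kappa (xi (k - 1)%nat) (xi k)
              (x (k - 1)%nat) (x k) e0 e1 z) as [Hex Hbound]; try tauto.
  { apply Rlt_le, (incr_lt x K x_incr). lia. }
  edestruct RInt_ext_open as [Hex' ->]; [exact (Rlt_le _ _ Hxi)| |exact Hex|].
  - intros s Hs. unfold integrand.
    rewrite Xmap_on_cell with (k := k), Hhat by (auto || lra). reflexivity.
  - split; [exact Hex'|]. exact Hbound.
Qed.

Lemma gradA_estimate i : (1 <= i <= K - 1)%nat ->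
  Rabs (gradA rho xi K x i - Derive rho (x i) * (delta xi i + delta xi (S i)) / 2)
  <= kappa * ((x i - x (i - 1)%nat) * delta xi i + (x (S i) - x i) * delta xi (S i)).
Proof.
  intros Hi.
  assert (Hxi_le : forall m n, (m <= n <= K)%nat -> xi m <= xi n) by (apply incr_le, xi_incr).
  assert (Hxi1 : xi (i - 1)%nat < xi i) by (apply (incr_lt xi K xi_incr); lia).
  assert (Hxi2 : xi i < xi (S i)) by (apply xi_incr; lia).
  assert (Hx1 : x (i - 1)%nat < x i) by (apply (incr_lt x K x_incr); lia).
  assert (Hx2 : x i < x (S i)) by (apply x_incr; lia).
  destruct (RInt_zero_open (integrand i) 0 (xi (i - 1)%nat)) as [Hex0 Hint0].
  { rewrite <- xi_0. apply Hxi_le. lia. }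
  { intros s Hs. unfold integrand. rewrite hat_out_of_support by (auto || lra). ring. }
  destruct (RInt_zero_open (integrand i) (xi (S i)) (xi K)) as [Hex3 Hint3].
  { apply Hxi_le. lia. }
  { intros s Hs. unfold integrand. rewrite hat_out_of_support by (auto || lra). ring. }
  destruct (RInt_integrand_on_cell i i 0 1 (x i)) as [Hex1 Hint1]; try lia; try lra.
  { intros s Hs. rewrite hat_on_cell_right by (auto || lia). unfold interp. field. lra. }
  destruct (RInt_integrand_on_cell (S i) i 1 0 (x i)) as [Hex2 Hint2]; try lia; try lra.
  { intros s Hs. pose proof (hat_on_cell_left xi K xi_incr (S i) s ltac:(lia) Hs) as Hhat.
    rewrite Nat.sub_succ, Nat.sub_0_r in *. rewrite Hhat. unfold interp. field. lra. }
  { rewrite Nat.sub_succ, Nat.sub_0_r. lra. }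
  replace (S i - 1)%nat with i in Hex2, Hint2 by lia.
  assert (Hex23 : ex_RInt (integrand i) (xi i) (xi K))
    by now apply ex_RInt_Chasles with (xi (S i)).
  assert (Hex13 : ex_RInt (integrand i) (xi (i - 1)%nat) (xi K))
    by now apply ex_RInt_Chasles with (xi i).
  unfold gradA. fold (integrand i).
  rewrite <- (RInt_Chasles _ 0 (xi (i - 1)%nat)), <- (RInt_Chasles _ (xi (i - 1)%nat) (xi i)),
    <- (RInt_Chasles _ (xi i) (xi (S i))), Hint0, Hint3 by assumption.
  unfold plus; simpl.
  set (I1 := RInt (integrand i) (xi (i - 1)%nat) (xi i)) in *.
  set (I2 := RInt (integrand i) (xi i) (xi (S i))) in *.
  replace (0 + (I1 + (I2 + 0)) - Derive rho (x i) * (delta xi i + delta xi (S i)) / 2)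
    with (I1 - Derive rho (x i) * (delta xi i * (0 + 1) / 2)
          + (I2 - Derive rho (x i) * (delta xi (S i) * (1 + 0) / 2))) by field.
  eapply Rle_trans; [apply Rabs_triang|].
  apply Rle_trans with (kappa * (x i - x (i - 1)%nat) * delta xi i
                        + kappa * (x (S i) - x i) * delta xi (S i));
    [now apply Rplus_le_compat | right; ring].
Qed.

Lemma residual_row_bound (v : nat -> R) i : (1 <= K)%nat ->
  Derive rho a = 0 -> Derive rho b = 0 ->
  (forall i, (1 <= i <= K - 1)%nat ->
     sum_n_m (fun j => Wmat xi i j * v j) 1 (K - 1) = gradA rho xi K x i) ->
  (1 <= i <= K - 1)%nat ->
  Rabs (sum1n (fun j => Wmat xi i j * (v j - Derive rho (x j))) (K - 1))
  <= 2 * kappa * dbar x K * (delta xi i + delta xi (S i)).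
Proof.
  intros HK Ha Hb HW Hi.
  set (w j := Derive rho (x j)).
  assert (Hx : forall k, (k <= K)%nat -> a <= x k <= b).
  { intros k Hk. rewrite <- x_0, <- x_K. split; apply (incr_le x K x_incr); lia. }
  assert (Hgap : forall k, (k < K)%nat -> 0 <= x (S k) - x k <= dbar x K).
  { intros k Hk. split; [apply Rlt_le, Rlt_0_minus, x_incr; lia|].
    apply (maxupto_ge (fun k => x (S k) - x k)). lia. }
  assert (Hdelta : forall k, (1 <= k <= K)%nat -> 0 < delta xi k).
  { intros k Hk. apply Rlt_0_minus, (incr_lt xi K xi_incr). lia. }
  rewrite (sum1n_ext _ (fun j => Wmat xi i j * v j - Wmat xi i j * w j))
    by (intros; unfold w; ring).
  (* rho_x(a) = rho_x(b) = 0 lets rows 1 and K - 1 use the full three-term stencil. *)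
  assert (Hw0 : w 0%nat = 0) by (unfold w; now rewrite x_0).
  assert (HwK : w (S (K - 1)) = 0)
    by (unfold w; now replace (S (K - 1)) with K by lia; rewrite x_K).
  rewrite sum1n_minus, <- sum_n_m_1, HW, Wmat_row by assumption.
  apply tridiag_residual_bound with (l1 := x i - x (i - 1)%nat) (l2 := x (S i) - x i).
  - exact kappa_ge0.
  - apply Hdelta. lia.
  - apply Hdelta. lia.
  - pose proof (Hgap (i - 1)%nat ltac:(lia)) as Hg.
    now replace (S (i - 1)) with i in Hg by lia.
  - apply Hgap. lia.
  - now apply gradA_estimate.
  - unfold w. eapply Rle_trans; [apply Drho_lip; apply Hx; lia|].
    right. f_equal. apply Rabs_pos_eq, Rlt_le, Rlt_0_minus, (incr_lt x K x_incr). lia.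
  - unfold w. eapply Rle_trans; [apply Drho_lip; apply Hx; lia|].
    right. f_equal. rewrite Rabs_minus_sym.
    apply Rabs_pos_eq, Rlt_le, Rlt_0_minus, x_incr. lia.
Qed.

End Gradient.

Theorem lemma27 : exists C : R,
  forall (a b M : R) (K : nat) (xi : nat -> R) (rho : R -> R) (kappa : R)
         (x : nat -> R) (v : nat -> R),
  a < b -> 0 < M -> (1 <= K)%nat ->
  xi 0%nat = 0 -> xi K = M -> (forall k, (k < K)%nat -> xi k < xi (S k)) ->
  x 0%nat = a -> x K = b -> (forall k, (k < K)%nat -> x k < x (S k)) ->
  (forall (n : nat) (t : R), a <= t <= b -> ex_derive_n rho n t) ->
  Derive rho a = 0 -> Derive rho b = 0 ->
  0 < kappa ->
  (forall t, a <= t <= b ->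
     Rabs (Derive_n rho 1 t) <= kappa /\ Rabs (Derive_n rho 2 t) <= kappa /\
     Rabs (Derive_n rho 3 t) <= kappa) ->
  (forall i, (1 <= i <= K - 1)%nat ->
     sum_n_m (fun j => Wmat xi i j * v j) 1 (K - 1) = gradA rho xi K x i) ->
  let nu := fun k => v k - Derive rho (x k) in
  sum_n_m (fun i => sum_n_m (fun j => nu i * Wmat xi i j * nu j) 1 (K - 1)) 1 (K - 1)
    <= C * kappa ^ 2 * alpha xi K * M * dbar x K ^ 2.
Proof.
  exists 48.
  intros a b M K xi rho kappa x v _ HM HK Hxi0 HxiK Hxi Hx0 HxK Hx Hsmooth Ha Hb Hk Hbounds HW nu.
  set (n := (K - 1)%nat). set (d := dbar x K).
  set (r i := sum1n (fun j => Wmat xi i j * nu j) n).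
  set (Dg i := delta xi i + delta xi (S i)).
  assert (Hdelta : forall i, (1 <= i <= S n)%nat -> 0 < delta xi i)
    by (intros; apply Rlt_0_minus, (incr_lt xi K Hxi); lia).
  assert (Hlip := Derive_lipschitz rho a b kappa (fun t Ht => Hsmooth 2%nat t Ht)
                    (fun t Ht => proj1 (proj2 (Hbounds t Ht)))).
  assert (Hres : forall i, (1 <= i <= n)%nat -> 0 <= Dg i /\ Rabs (r i) <= 2 * kappa * d * Dg i).
  { intros i Hi. split.
    - pose proof (Hdelta i ltac:(lia)). pose proof (Hdelta (S i) ltac:(lia)). unfold Dg. lra.
    - apply (residual_row_bound rho a b kappa xi x K); auto; [lra|].
      intros t Ht. apply Derive_continuous, Hsmooth, Ht. }
  assert (Hquad : sum1n (fun i => sum1n (fun j => nu i * Wmat xi i j * nu j) n) n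
                  = sum1n (fun i => nu i * r i) n).
  { apply sum1n_ext. intros i _. unfold r. rewrite <- sum1n_scal_l.
    apply sum1n_ext. intros. ring. }
  assert (Hlow := Wmat_quad_form_ge xi nu n Hdelta). rewrite Hquad in Hlow.
  rewrite sum_n_m_1, (sum1n_ext _ _ n (fun i _ => sum_n_m_1 _ n)), Hquad.
  assert (HQ := quad_form_absorb nu r Dg n (2 * kappa * d) Hres Hlow).
  assert (HS : sum1n Dg n <= 2 * M).
  { rewrite <- HxiK. replace K with (S n) by lia.
    apply sum1n_adjacent_steps; [exact Hxi0|]. intros. apply Hxi. lia. }
  assert (Hal := alpha_ge_1 xi K HK Hxi).
  assert (0 <= kappa ^ 2 * d ^ 2) by (apply Rmult_le_pos; apply pow2_ge_0).
  assert (kappa ^ 2 * d ^ 2 * M <= kappa ^ 2 * d ^ 2 * (alpha xi K * M)) by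
    (apply Rmult_le_compat_l; nra).
  nra.
Qed.
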